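(* Let $p_1,\dots,p_n\ge0$ and unit vectors $\vec a_1,\dots,\vec a_n\in\mathbb{R}^3$ satisfy $\sum_ip_i=2$ and $\sum_ip_i\vec a_i=\vec0$, and let $f:\mathbb{R}^3\to\mathbb{R}$, $f(\vec x)=\sum_ip_i\,\Theta(\vec x\cdot\vec a_i)$. Then (1) $f(\vec x)=\frac12\sum_ip_i\,|\vec a_i\cdot\vec x|$ for all $\vec x\in\mathbb{R}^3$; in particular $f$ is continuous and $f(\alpha\vec x)=|\alpha|f(\vec x)$ for all $\alpha\in\mathbb{R}$ (so $f(-\vec x)=f(\vec x)$); (2) $\sum_{s_x,s_y,s_z=\pm1}f(\vec v_{s_xs_ys_z})\le 8$.
   Context: $\Theta(x)=x$ for $x\ge0$ and $\Theta(x)=0$ for $x<0$. For $s_x,s_y,s_z\in\{+1,-1\}$, $\vec v_{s_xs_ys_z}=(s_x,s_y,s_z)^T$. *)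

From HB Require Import structures.
From mathcomp Require Import all_boot all_order all_algebra.
From mathcomp Require Import all_classical all_reals all_analysis.
Set Implicit Arguments. Unset Strict Implicit. Unset Printing Implicit Defensive.
Import Order.TTheory GRing.Theory Num.Theory.
Import numFieldNormedType.Exports.
Local Open Scope ring_scope.

Definition Theta {R : realType} (x : R) : R := if 0 <= x then x else 0.

Definition dot3 {R : realType} (x y : 'rV[R]_3) : R := \sum_(k < 3) x 0 k * y 0 k.

Definition sgnb {R : realType} (b : bool) : R := if b then 1 else -1.

Definition vsign {R : realType} (sx sy sz : bool) : 'rV[R]_3 :=
  \row_(k < 3) [:: sgnb sx; sgnb sy; sgnb sz]`_k.

From HB Require Import structures.
From mathcomp Require Import all_boot all_order all_algebra.
From mathcomp Require Import all_classical all_reals all_analysis.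
From mathcomp Require Import ring lra.
Import Order.TTheory GRing.Theory Num.Theory.
Import numFieldNormedType.Exports.
Local Open Scope ring_scope.

(* Since Theta t = (t + |t|)/2, f is half the sum of p_i |a_i . x| plus half of
   (sum_i p_i a_i) . x, which vanishes by the balance condition; continuity and
   absolute homogeneity are then read off this form.  For the bound, the cross
   terms cancel when the squares of a . v are summed over the eight sign vectors v,
   giving 8 |a|^2 = 8; combined with |t| <= (t^2 + 1)/2 this bounds the sum of the
   |a . v| by 8 for each unit a, and the weights p_i sum to 2. *)

Lemma continuous_sum (T : topologicalType) (R : realType) (I : Type) (r : seq I)
    (g : I -> T -> R) :
  (forall i, continuous (g i)) -> continuous (fun x => \sum_(i <- r) g i x).
Proof.
move=> gC; elim: r => [|i r IHr].
  by under eq_fun do rewrite big_nil; exact: cst_continuous.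
under eq_fun do rewrite big_cons.
by move=> x; apply: continuousD; [exact: gC | exact: IHr].
Qed.

Section Dot3.
Variable R : realType.
Implicit Types (u v x : 'rV[R]_3) (c : R).

Lemma dot3C u v : dot3 u v = dot3 v u.
Proof. by apply: eq_bigr => k _; rewrite mulrC. Qed.

Lemma dot3Zr u c v : dot3 u (c *: v) = c * dot3 u v.
Proof. by rewrite /dot3 mulr_sumr; apply: eq_bigr => k _; rewrite mxE mulrCA. Qed.

Lemma dot3_sumr (I : Type) (r : seq I) (c : I -> R) (w : I -> 'rV[R]_3) u :
  dot3 u (\sum_(i <- r) c i *: w i) = \sum_(i <- r) c i * dot3 u (w i).
Proof.
rewrite /dot3; under eq_bigr do rewrite summxE mulr_sumr.
rewrite exchange_big /=; apply: eq_bigr => i _.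
by rewrite mulr_sumr; apply: eq_bigr => k _; rewrite mxE mulrCA.
Qed.

Lemma dot3E u v :
  dot3 u v = u 0 0 * v 0 0 + u 0 1 * v 0 1 + u 0 2%:R * v 0 2%:R.
Proof.
rewrite /dot3 !big_ord_recr big_ord0 /= add0r.
by congr (_ * _ + _ * _ + _ * _); congr (_ 0 _); apply/val_inj.
Qed.

Lemma dot3_continuous u : continuous (fun x => dot3 u x).
Proof.
apply: continuous_sum => k x.
by apply: continuousM; [exact: cst_continuous | exact: coord_continuous].
Qed.

End Dot3.

Lemma ThetaE (R : realType) (t : R) : Theta t = 2^-1 * (t + `|t|).
Proof.
rewrite /Theta; case: ifPn => [t_ge0|/negbTE t_lt0].
  by rewrite ger0_norm //; lra.
by rewrite ltr0_norm ?ltNge ?t_lt0 //; lra.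
Qed.

Lemma normr_le_sqr_add1_half (R : realFieldType) (t : R) : `|t| <= 2^-1 * (t ^+ 2 + 1).
Proof. by have := sqr_ge0 (`|t| - 1); rewrite -[t ^+ 2]real_normK ?num_real //; nra. Qed.

Definition vsign_sum {R : realType} (g : 'rV[R]_3 -> R) : R :=
  \sum_(sx : bool) \sum_(sy : bool) \sum_(sz : bool) g (vsign sx sy sz).

Section VsignSum.
Variable R : realType.
Implicit Types (g h : 'rV[R]_3 -> R) (u : 'rV[R]_3) (c : R).

Lemma vsign_sumZ c g : vsign_sum (fun x => c * g x) = c * vsign_sum g.
Proof. by rewrite /vsign_sum !big_bool /=; lra. Qed.

Lemma ler_vsign_sum g h : (forall x, g x <= h x) -> vsign_sum g <= vsign_sum h.
Proof. by move=> le_gh; do 3 (apply: ler_sum => ? _); exact: le_gh. Qed.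

Lemma vsign_sum_sum (I : finType) (F : I -> 'rV[R]_3 -> R) :
  vsign_sum (fun x => \sum_i F i x) = \sum_i vsign_sum (F i).
Proof.
rewrite /vsign_sum; under eq_bigr do under eq_bigr do rewrite exchange_big.
by under eq_bigr do rewrite exchange_big; rewrite exchange_big.
Qed.

(* The cross terms s_j s_k u_j u_k cancel in pairs. *)
Lemma vsign_sum_dot_sqr u : vsign_sum (fun x => dot3 u x ^+ 2) = 8 * dot3 u u.
Proof. by rewrite /vsign_sum !big_bool /= !dot3E /vsign !mxE /= /sgnb; ring. Qed.

Lemma vsign_sum_normr_dot_le u :
  dot3 u u = 1 -> vsign_sum (fun x => `|dot3 u x|) <= 8.
Proof.
move=> u_unit.
have := ler_vsign_sum _ _ (fun x => normr_le_sqr_add1_half _ (dot3 u x)).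
have := vsign_sum_dot_sqr u; rewrite u_unit /vsign_sum !big_bool /=; lra.
Qed.

End VsignSum.

Section WeightedDirections.
Context {R : realType} {I : finType} (p : I -> R) (a : I -> 'rV[R]_3).

Definition weighted_abs_dot (x : 'rV[R]_3) : R := \sum_i p i * `|dot3 (a i) x|.

Lemma sum_Theta_dot_balanced x : \sum_i p i *: a i = 0 ->
  \sum_i p i * Theta (dot3 x (a i)) = 2^-1 * weighted_abs_dot x.
Proof.
move=> balanced.
have odd_part : \sum_i p i * dot3 x (a i) = 0.
  by rewrite -dot3_sumr balanced /dot3 big1 // => k _; rewrite mxE mulr0.
transitivity (\sum_i (2^-1 * (p i * dot3 x (a i)) + 2^-1 * (p i * `|dot3 (a i) x|))).
  by apply: eq_bigr => i _; rewrite ThetaE (dot3C _ x); ring.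
by rewrite big_split /= -!mulr_sumr odd_part mulr0 add0r.
Qed.

Lemma weighted_abs_dot_continuous : continuous weighted_abs_dot.
Proof.
apply: continuous_sum => i x.
apply: (@continuousM _ _ (fun=> p i) (fun y => `|dot3 (a i) y|)).
  exact: cst_continuous.
exact: (continuous_comp (dot3_continuous _ (a i) x)
  (@norm_continuous R R^o (dot3 (a i) x))).
Qed.

Lemma weighted_abs_dotZ c x : weighted_abs_dot (c *: x) = `|c| * weighted_abs_dot x.
Proof.
rewrite /weighted_abs_dot mulr_sumr.
by apply: eq_bigr => i _; rewrite dot3Zr normrM mulrCA.
Qed.

Lemma vsign_sum_weighted_abs_dot_le :
  (forall i, 0 <= p i) -> (forall i, dot3 (a i) (a i) = 1) ->
  vsign_sum weighted_abs_dot <= 8 * \sum_i p i.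
Proof.
move=> p_ge0 a_unit; rewrite vsign_sum_sum mulr_sumr.
apply: ler_sum => i _; rewrite vsign_sumZ [leRHS]mulrC ler_wpM2l //.
exact: vsign_sum_normr_dot_le.
Qed.

End WeightedDirections.

Theorem mainTheorem5 (R : realType) (n : nat) (p : 'I_n -> R) (a : 'I_n -> 'rV[R]_3)
  (hp : forall i, 0 <= p i)
  (ha : forall i, dot3 (a i) (a i) = 1)
  (hsum : \sum_(i < n) p i = 2)
  (hbal : \sum_(i < n) p i *: a i = 0)
  (f : 'rV[R]_3 -> R)
  (hf : forall x, f x = \sum_(i < n) p i * Theta (dot3 x (a i))) :
  ((forall x, f x = 2^-1 * \sum_(i < n) p i * `|dot3 (a i) x|)
   /\ continuous f
   /\ (forall (alpha : R) x, f (alpha *: x) = `|alpha| * f x)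
   /\ (forall x, f (- x) = f x))
  /\ \sum_(sx : bool) \sum_(sy : bool) \sum_(sz : bool) f (vsign sx sy sz) <= 8.
Proof.
have fE : f = fun x => 2^-1 * weighted_abs_dot p a x.
  by apply: funext => x; rewrite hf sum_Theta_dot_balanced.
have fZ (alpha : R) x : f (alpha *: x) = `|alpha| * f x.
  by rewrite fE /= weighted_abs_dotZ mulrCA.
split; [split; [by rewrite fE | split; [|split]] |].
- rewrite fE => x; apply: (@continuousM _ _ (fun=> 2^-1) (weighted_abs_dot p a)).
    exact: cst_continuous.
  exact: weighted_abs_dot_continuous.
- exact: fZ.
- by move=> x; rewrite -scaleN1r fZ normrN1 mul1r.
- change (vsign_sum f <= 8); rewrite fE vsign_sumZ.
  have -> : 8 = 2^-1 * (8 * \sum_(i < n) p i) :> R by rewrite hsum; lra.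
  rewrite ler_wpM2l ?invr_ge0 ?ler0n //.
  exact: vsign_sum_weighted_abs_dot_le.
Qed.
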